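(* Every enhanced Gelfand--Zetlin pattern of rank zero is efficient.
   Context: Let $\lambda=(\lambda_1\ge\dots\ge\lambda_n)$ be a partition. A GZ pattern with top row $\lambda$ is an integer array $a_{ij}$, $0\le i\le n-1$, $1\le j\le n-i$, with $a_{0j}=\lambda_{n+1-j}$ and $a_{i-1,j}\le a_{ij}\le a_{i-1,j+1}$ ($a_{ij}$ sits below $a_{i-1,j}$ and $a_{i-1,j+1}$). An enhanced GZ pattern is such an array with a set of encircled entries and a set of edges, each joining an $a_{ij}$ ($i\ge1$) with $a_{i-1,j}$ or $a_{i-1,j+1}$, such that: (1) row $0$ entries are encircled; (2) entries joined by an edge are equal and the lower one is encircled; (3) for $i\ge1$, $1\le j\le n-i-1$: both $a_{ij},a_{i,j+1}$ are joined to $a_{i-1,j+1}$ iff both are joined to $a_{i+1,j}$; (4) if $a_{0j}=a_{0,j+1}$ then $a_{1j}$ is encircled and joined to both; (5) if $a_{i-1,j}<a_{i-1,j+1}$ and $a_{ij}=a_{i-1,j}$, then $a_{ij}$ is encircled and joined to $a_{i-1,j}$; (6) if $a_{i-1,j}<a_{i-1,j+1}$, $a_{ij}=a_{i-1,j+1}$ and $a_{ij}$ is encircled, then it is joined to $a_{i-1,j+1}$; (7) if $a_{i-1,j}=a_{i-1,j+1}=a_{ij}$ and $a_{i-1,j},a_{i-1,j+1}$ can be connected by a path of edges, then $a_{ij}$ is encircled and joined to both; (8) if $a_{i-1,j}=a_{i-1,j+1}=a_{ij}$ and $a_{ij}$ is encircled, then it is joined to at least one of them. The rank is the number of non-encircled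 entries. The pattern is inefficient if it contains $a_{i-1,j}=a_{i-1,j+1}=a_{ij}$ with no edge between $a_{ij}$ and $a_{i-1,j+1}$, and efficient otherwise. *)

From mathcomp Require Import all_boot.
Set Implicit Arguments. Unset Strict Implicit. Unset Printing Implicit Defensive.

(* Conventions.
   n            : number of parts of the partition (size of the top row).
   lam k        : lambda_k, for 1 <= k <= n (values outside are irrelevant).
   a i j        : the entry a_{ij}; row i (0 <= i <= n-1) has entries j = 1..n-i.
   enc i j      : a_{ij} is encircled.
   eL i j       : there is an edge joining a_{ij} (i >= 1) with a_{i-1,j}.
   eR i j       : there is an edge joining a_{ij} (i >= 1) with a_{i-1,j+1}. *)

Definition is_partition (n : nat) (lam : nat -> nat) : Prop :=
  forall k, 1 <= k -> k < n -> lam k.+1 <= lam k.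

Definition valid_pos (n i j : nat) : bool := (i < n) && (1 <= j <= n - i).

Definition GZ_pattern (n : nat) (lam : nat -> nat) (a : nat -> nat -> nat) : Prop :=
  (forall j, 1 <= j <= n -> a 0 j = lam (n.+1 - j)) /\
  (forall i j, valid_pos n i.+1 j -> a i j <= a i.+1 j /\ a i.+1 j <= a i j.+1).

Inductive edge_adj (eL eR : nat -> nat -> bool) : nat * nat -> nat * nat -> Prop :=
  | adjL_down i j : eL i.+1 j -> edge_adj eL eR (i.+1, j) (i, j)
  | adjL_up   i j : eL i.+1 j -> edge_adj eL eR (i, j) (i.+1, j)
  | adjR_down i j : eR i.+1 j -> edge_adj eL eR (i.+1, j) (i, j.+1)
  | adjR_up   i j : eR i.+1 j -> edge_adj eL eR (i, j.+1) (i.+1, j).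

Inductive edge_connected (eL eR : nat -> nat -> bool) : nat * nat -> nat * nat -> Prop :=
  | ec_refl p : edge_connected eL eR p p
  | ec_step p q r : edge_adj eL eR p q -> edge_connected eL eR q r ->
                    edge_connected eL eR p r.

Definition enhanced_GZ (n : nat) (lam : nat -> nat) (a : nat -> nat -> nat)
    (enc eL eR : nat -> nat -> bool) : Prop :=
  GZ_pattern n lam a /\
  (forall i j, eL i j -> 1 <= i /\ valid_pos n i j) /\
  (forall i j, eR i j -> 1 <= i /\ valid_pos n i j) /\
  (forall j, valid_pos n 0 j -> enc 0 j) /\
  (forall i j, eL i.+1 j -> a i.+1 j = a i j /\ enc i.+1 j) /\
  (forall i j, eR i.+1 j -> a i.+1 j = a i j.+1 /\ enc i.+1 j) /\
  (forall i j, 1 <= i -> 1 <= j -> j <= n - i - 1 ->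
     (eR i j && eL i j.+1) = (eL i.+1 j && eR i.+1 j)) /\
  (forall j, 1 <= j -> j < n -> a 0 j = a 0 j.+1 ->
     [&& enc 1 j, eL 1 j & eR 1 j]) /\
  (forall i j, valid_pos n i.+1 j -> a i j < a i j.+1 -> a i.+1 j = a i j ->
     enc i.+1 j && eL i.+1 j) /\
  (forall i j, valid_pos n i.+1 j -> a i j < a i j.+1 -> a i.+1 j = a i j.+1 ->
     enc i.+1 j -> eR i.+1 j) /\
  (forall i j, valid_pos n i.+1 j -> a i j = a i j.+1 -> a i.+1 j = a i j ->
     edge_connected eL eR (i, j) (i, j.+1) ->
     [&& enc i.+1 j, eL i.+1 j & eR i.+1 j]) /\
  (forall i j, valid_pos n i.+1 j -> a i j = a i j.+1 -> a i.+1 j = a i j ->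
     enc i.+1 j -> eL i.+1 j || eR i.+1 j).

Definition GZ_rank (n : nat) (enc : nat -> nat -> bool) : nat :=
  \sum_(0 <= i < n) \sum_(1 <= j < (n - i).+1) ~~ enc i j.

Definition inefficient (n : nat) (a : nat -> nat -> nat) (eR : nat -> nat -> bool) : Prop :=
  exists i j, [/\ valid_pos n i.+1 j, a i j = a i j.+1, a i.+1 j = a i j & ~~ eR i.+1 j].

Definition efficient n a eR : Prop := ~ inefficient n a eR.

From mathcomp Require Import all_boot.
From mathcomp Require Import zify.

(* By induction on the row i, any two equal neighbours a_{ij} = a_{i,j+1} are
   joined by a path of edges: in row 0 by rule (4), through the entry below them.
   If this holds in row i, rules (5), (6) and (7) force every entry of row i+1 that
   equals one of its two parents to be joined to it (rank zero supplies the circle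
   needed by (6)); interlacing makes equal neighbours a_{i+1,j} = a_{i+1,j+1} equal
   to the parent a_{i,j+1} between them, so they are connected through it.  Finally,
   an entry below two equal parents is equal to both, hence joined to the right one. *)

Lemma GZ_rank_eq0_encircled n enc :
  GZ_rank n enc = 0 -> forall i j, valid_pos n i j -> enc i j.
Proof.
move=> /eqP rank0 i j /andP[lt_i_n /andP[ge1_j le_j]].
move: rank0; rewrite sum_nat_seq_eq0 => /allP /(_ i).
rewrite mem_index_iota lt_i_n => /(_ isT); rewrite sum_nat_seq_eq0 => /allP /(_ j).
by rewrite mem_index_iota ge1_j ltnS le_j => /(_ isT); case: (enc i j).
Qed.

Lemma edge_connected_below (eL eR : nat -> nat -> bool) i j :
  eL i.+1 j -> eR i.+1 j -> edge_connected eL eR (i, j) (i, j.+1).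
Proof.
move=> hL hR; apply: ec_step (adjL_up _ hL) _.
exact: ec_step (adjR_down _ hR) (ec_refl _ _ _).
Qed.

Lemma edge_connected_above (eL eR : nat -> nat -> bool) i j :
  eR i.+1 j -> eL i.+1 j.+1 -> edge_connected eL eR (i.+1, j) (i.+1, j.+1).
Proof.
move=> hR hL; apply: ec_step (adjR_down _ hR) _.
exact: ec_step (adjL_up _ hL) (ec_refl _ _ _).
Qed.

Section RankZero.

Variables (n : nat) (a : nat -> nat -> nat) (enc eL eR : nat -> nat -> bool).

Hypothesis interlacing : forall {i j}, valid_pos n i.+1 j ->
  a i j <= a i.+1 j /\ a i.+1 j <= a i j.+1.
Hypothesis top_equal_edges : forall j, 1 <= j -> j < n -> a 0 j = a 0 j.+1 ->
  [&& enc 1 j, eL 1 j & eR 1 j].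
Hypothesis strict_left_edge : forall {i j}, valid_pos n i.+1 j ->
  a i j < a i j.+1 -> a i.+1 j = a i j -> enc i.+1 j && eL i.+1 j.
Hypothesis strict_right_edge : forall {i j}, valid_pos n i.+1 j ->
  a i j < a i j.+1 -> a i.+1 j = a i j.+1 -> enc i.+1 j -> eR i.+1 j.
Hypothesis connected_double_edge : forall {i j}, valid_pos n i.+1 j ->
  a i j = a i j.+1 -> a i.+1 j = a i j ->
  edge_connected eL eR (i, j) (i, j.+1) -> [&& enc i.+1 j, eL i.+1 j & eR i.+1 j].
Hypothesis all_encircled : forall {i j}, valid_pos n i j -> enc i j.

Definition equal_neighbours_connected (i : nat) : Prop :=
  forall j, valid_pos n i.+1 j -> a i j = a i j.+1 ->
    edge_connected eL eR (i, j) (i, j.+1).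

Lemma equal_neighbours_connected0 : equal_neighbours_connected 0.
Proof.
move=> j /andP[lt1n /andP[ge1_j le_j]] eq_a.
have /and3P[_ hL hR] := top_equal_edges j ge1_j ltac:(lia) eq_a.
exact: edge_connected_below.
Qed.

Section NextRow.

Context {i : nat}.
Hypothesis connected_i : equal_neighbours_connected i.

Lemma eq_left_parent_edge {j} : valid_pos n i.+1 j -> a i.+1 j = a i j -> eL i.+1 j.
Proof.
move=> v eq_a; have [le1 le2] := interlacing v.
have [lt_a | ge_a] := ltnP (a i j) (a i j.+1).
  by case/andP: (strict_left_edge v lt_a eq_a).
have eq_p : a i j = a i j.+1 by lia.
by case/and3P: (connected_double_edge v eq_p eq_a (connected_i _ v eq_p)).
Qed.

Lemma eq_right_parent_edge {j} : valid_pos n i.+1 j -> a i.+1 j = a i j.+1 -> eR i.+1 j.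
Proof.
move=> v eq_a; have [le1 le2] := interlacing v.
have [lt_a | ge_a] := ltnP (a i j) (a i j.+1).
  exact: strict_right_edge v lt_a eq_a (all_encircled v).
have eq_p : a i j = a i j.+1 by lia.
by case/and3P: (connected_double_edge v eq_p ltac:(lia) (connected_i _ v eq_p)).
Qed.

Lemma equal_neighbours_connectedS : equal_neighbours_connected i.+1.
Proof.
move=> j /andP[lt_n /andP[ge1_j le_j]] eq_a.
have v : valid_pos n i.+1 j by rewrite /valid_pos; lia.
have v' : valid_pos n i.+1 j.+1 by rewrite /valid_pos; lia.
have [_ le1] := interlacing v; have [le2 _] := interlacing v'.
apply: edge_connected_above.
  by apply: eq_right_parent_edge v _; lia.
by apply: eq_left_parent_edge v' _; lia.
Qed.

End NextRow.

Lemma equal_neighbours_connected_all i : equal_neighbours_connected i.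
Proof.
elim: i => [|i IH]; first exact: equal_neighbours_connected0.
exact: equal_neighbours_connectedS.
Qed.

Lemma rank0_efficient : efficient n a eR.
Proof.
move=> [i [j [v eq_p eq_a not_eR]]].
case/negP: not_eR.
by apply: (eq_right_parent_edge (equal_neighbours_connected_all i) v); rewrite eq_a.
Qed.

End RankZero.

Theorem proposition4p1 (n : nat) (lam : nat -> nat) (a : nat -> nat -> nat)
    (enc eL eR : nat -> nat -> bool) :
  is_partition n lam ->
  enhanced_GZ n lam a enc eL eR ->
  GZ_rank n enc = 0 ->
  efficient n a eR.
Proof.
move=> _ [[_ interlacing] [_ [_ [_ [_ [_ [_ [rule4 [rule5 [rule6 [rule7 _]]]]]]]]]]].
move=> /GZ_rank_eq0_encircled all_encircled.
exact: rank0_efficient interlacing rule4 rule5 rule6 rule7 all_encircled.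
Qed.
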